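(* Let $a$ be a finite set, $\eta<\omega_1$, and $(R^{(\rho)})_{\rho\leq\eta}$ a resolution family of tree relations on $a^{<\omega}$ with $R^{(0)}=\prec$. Let $\rho<\eta$ and $s,s',s''\in a^{<\omega}$ with $s\prec s'\,R^{(\rho)}\,s''$ and $s\,R^{(\rho+1)}\,s''$. Then $s\,R^{(\rho+1)}\,s'$.
   Context: $\prec$ is the non-strict extension (initial segment) relation on $a^{<\omega}$. A partial order $R$ on $a^{<\omega}$ is a tree relation if for every $t\in a^{<\omega}$: $\emptyset\,R\,t$, and the set $\{s\in a^{<\omega}: s\,R\,t\}$ is finite and linearly ordered by $R$. If $R\subseteq S$ are tree relations, $R$ is distinguished in $S$ if for all $s,t,u$: $s\,S\,t\,S\,u$ and $s\,R\,u$ imply $s\,R\,t$. A family $(R^{(\rho)})_{\rho\leq\eta}$ of tree relations is a resolution family if $R^{(\rho+1)}$ is a distinguished subtree relation of $R^{(\rho)}$ (i.e. $R^{(\rho+1)}\subseteq R^{(\rho)}$ and distinguished in it) for each $\rho<\eta$, and $R^{(\lambda)}=\bigcap_{\rho<\lambda}R^{(\rho)}$ for each limit $\lambda\leq\eta$. *)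

From mathcomp Require Import all_boot.
Set Implicit Arguments. Unset Strict Implicit. Unset Printing Implicit Defensive.

(* Nodes of a^{<omega}: finite sequences over a finite type A.
   The non-strict extension relation s ≺ t is [prefix s t] (mathcomp seq). *)

Section Trees.
Variable A : finType.
Definition relS := seq A -> seq A -> Prop.

Definition partial_order (R : relS) :=
  [/\ forall s, R s s,
      forall s t, R s t -> R t s -> s = t &
      forall s t u, R s t -> R t u -> R s u].

Definition tree_relation (R : relS) :=
  [/\ partial_order R,
      forall t, R [::] t,
      forall t, exists l : seq (seq A), forall s, R s t -> s \in l &
      forall t s1 s2, R s1 t -> R s2 t -> R s1 s2 \/ R s2 s1].

Definition distinguished (R S : relS) :=
  forall s t u, S s t -> S t u -> R s u -> R s t.

Definition distinguished_subtree (R S : relS) :=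
  (forall s t, R s t -> S s t) /\ distinguished R S.
End Trees.

(* Ordinals <= eta with eta < omega_1 are represented by a countable type O
   with a strict well-order lt whose greatest element is eta: every such
   structure is order-isomorphic to the ordinal eta+1 with eta countable. *)
Section Ordinals.
Variables (O : Type) (lt : O -> O -> Prop).

Definition well_order :=
  [/\ forall x, ~ lt x x,
      forall x y z, lt x y -> lt y z -> lt x z,
      forall x y, x = y \/ lt x y \/ lt y x &
      well_founded lt].

Definition countable_type := exists f : O -> nat, forall x y, f x = f y -> x = y.

Definition is_greatest (eta : O) := forall x, x = eta \/ lt x eta.

Definition is_zero (z : O) := forall x, ~ lt x z.

Definition is_succ (r r' : O) :=
  lt r r' /\ forall x, lt r x -> x = r' \/ lt r' x.

Definition is_limit (l : O) := ~ is_zero l /\ ~ (exists r, is_succ r l).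

Definition countable_ordinal_upto (eta : O) :=
  [/\ well_order, countable_type & is_greatest eta].
End Ordinals.

Definition resolution_family (A : finType) (O : Type) (lt : O -> O -> Prop)
    (R : O -> relS A) :=
  [/\ forall r, tree_relation (R r),
      forall r r', is_succ lt r r' -> distinguished_subtree (R r') (R r) &
      forall l, is_limit lt l ->
        forall s t, R l s t <-> (forall r, lt r l -> R r s t)].

From mathcomp Require Import all_boot.
From Stdlib Require Import Classical.

Set Implicit Arguments.
Unset Strict Implicit.
Unset Printing Implicit Defensive.

(* Successor steps and limits of a resolution family only shrink relations, so
   by well-founded induction every R^(rho) is contained in the extension order.
   Both s and s' lie R^(rho)-below s'', so the tree property of R^(rho) makes
   them comparable: s' R^(rho) s would force s' ≺ s, hence s = s', and
   otherwise distinguishedness of R^(rho+1) in R^(rho) yields s R^(rho+1) s'. *)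

Lemma prefix_anti (T : eqType) (s t : seq T) : prefix s t -> prefix t s -> s = t.
Proof.
move=> /prefixP [u ->] /size_prefix; rewrite size_cat -{2}[size s]addn0 leq_add2l.
by rewrite leqn0 size_eq0 => /eqP ->; rewrite cats0.
Qed.

Section ResolutionFamily.
Variables (A : finType) (O : Type) (lt : O -> O -> Prop) (R : O -> relS A).
Hypotheses (lt_wf : well_founded lt) (R_res : resolution_family lt R).
Hypothesis R_zero : forall z, is_zero lt z -> forall s t, R z s t <-> prefix s t.

Lemma resolution_sub_prefix r s t : R r s t -> prefix s t.
Proof.
case: R_res => _ R_succ R_lim.
elim/(well_founded_induction lt_wf): r s t => r IH s t Rst.
case: (classic (is_zero lt r)) => [r0 | /not_all_ex_not [x /NNPP ltxr]].
  exact: (iffLR (R_zero r0 s t)).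
have [[q succ_qr] | not_succ] := classic (exists q, is_succ lt q r).
  by apply: (IH q (proj1 succ_qr)); apply: (proj1 (R_succ _ _ succ_qr)).
have r_lim : is_limit lt r by split=> // r0; exact: r0 x ltxr.
exact: IH x ltxr s t (iffLR (R_lim r r_lim s t) Rst x ltxr).
Qed.

End ResolutionFamily.

Lemma distinguished_prefix_below (A : finType) (R0 R1 : relS A) :
  tree_relation R0 -> tree_relation R1 -> distinguished_subtree R1 R0 ->
  (forall s t, R0 s t -> prefix s t) ->
  forall s s' s'', prefix s s' -> R0 s' s'' -> R1 s s'' -> R1 s s'.
Proof.
move=> [_ _ _ R0_lin] [[R1_refl _ _] _ _ _] [R1_sub R1_dist] R0_prefix.
move=> s s' s'' pss' R0s's'' R1ss''.
case: (R0_lin s'' s s' (R1_sub _ _ R1ss'') R0s's'') => [R0ss' | R0s's].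
  exact: R1_dist R0ss' R0s's'' R1ss''.
by rewrite (prefix_anti pss' (R0_prefix _ _ R0s's)).
Qed.

Theorem lemma2p3p2 (A : finType) (O : Type) (lt : O -> O -> Prop) (eta : O)
    (R : O -> seq A -> seq A -> Prop) :
  countable_ordinal_upto lt eta ->
  resolution_family lt R ->
  (forall z, is_zero lt z -> forall s t, R z s t <-> prefix s t) ->
  forall rho rho1, lt rho eta -> is_succ lt rho rho1 ->
  forall s s' s'' : seq A,
    prefix s s' -> R rho s' s'' -> R rho1 s s'' -> R rho1 s s'.
Proof.
move=> [[_ _ _ lt_wf] _ _] R_res R_zero rho rho1 _ succ_rho.
have R_prefix := resolution_sub_prefix lt_wf R_res R_zero.
case: R_res => R_tree R_succ _.
exact: distinguished_prefix_below (R_tree rho) (R_tree rho1) (R_succ _ _ succ_rho)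
  (R_prefix rho).
Qed.
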